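(* Let $M$ be a monoid with identity $1$. Then $\sigma_m^*(M)<\sigma_m(M)$ if and only if $M-\{1\}$ is a subsemigroup of $M$ which is a group and $\sigma_s(M-\{1\})>2$. Moreover, if $\sigma_m^*(M)<\sigma_m(M)$, then $\sigma_m^*(M)=2$.
   Context: A subsemigroup is a nonempty subset closed under the operation. For a monoid $M$: a submonoid is a subsemigroup containing the identity of $M$; a monoidal subsemigroup is a subsemigroup that is a monoid in its own right (identity possibly different from that of $M$). $\sigma_s$, $\sigma_m$, $\sigma_m^*$ denote the least positive integer $n$ such that the structure is the union of $n$ proper subsemigroups, proper submonoids, respectively proper monoidal subsemigroups, or $\infty$ if no such finite $n$ exists (with the convention that $\infty<\infty$ is false). *)

From Stdlib Require Import Arith Lia ClassicalEpsilon.

Set Implicit Arguments.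
Section Covers.
Variables (T : Type) (op : T -> T -> T).

Definition subsg (A S : T -> Prop) : Prop :=
  (exists x, S x) /\ (forall x, S x -> A x) /\
  (forall x y, S x -> S y -> S (op x y)).

Definition proper (A S : T -> Prop) : Prop := exists x, A x /\ ~ S x.

Definition is_identity_on (S : T -> Prop) (u : T) : Prop :=
  S u /\ forall x, S x -> op u x = x /\ op x u = x.

Definition covered_by (A : T -> Prop) (P : (T -> Prop) -> Prop) (n : nat) : Prop :=
  exists F : nat -> (T -> Prop),
    (forall i, i < n -> P (F i)) /\
    (forall x, A x <-> exists i, i < n /\ F i x).

(* k is the least positive n such that A is a union of n sets satisfying P;
   None encodes infinity (no such finite n). *)
Definition is_cover_number (A : T -> Prop) (P : (T -> Prop) -> Prop)
    (k : option nat) : Prop :=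
  match k with
  | Some n => 1 <= n /\ covered_by A P n /\
              forall m, 1 <= m -> covered_by A P m -> n <= m
  | None => forall n, 1 <= n -> ~ covered_by A P n
  end.

Definition cover_number (A : T -> Prop) (P : (T -> Prop) -> Prop) : option nat :=
  epsilon (inhabits None) (is_cover_number A P).

Definition sigma_s (A : T -> Prop) : option nat :=
  cover_number A (fun S => subsg A S /\ proper A S).

Definition sigma_m (e : T) : option nat :=
  cover_number (fun _ => True)
    (fun S => subsg (fun _ => True) S /\ S e /\ proper (fun _ => True) S).

Definition sigma_m_star : option nat :=
  cover_number (fun _ => True)
    (fun S => subsg (fun _ => True) S /\ (exists u, is_identity_on S u) /\
              proper (fun _ => True) S).

Definition is_group_on (A : T -> Prop) : Prop :=
  exists u, is_identity_on A u /\
    forall x, A x -> exists y, A y /\ op x y = u /\ op y x = u.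

End Covers.

(* strict order on nat ∪ {∞} (None = ∞), with ∞ < ∞ false *)
Definition ext_lt (a b : option nat) : Prop :=
  match a, b with
  | Some m, Some n => m < n
  | Some _, None => True
  | None, _ => False
  end.

(** If [sigma_m^*(M) < sigma_m(M)], some member of an optimal cover by proper
    monoidal subsemigroups must be exactly [N = M - {1}]: otherwise adjoining [1]
    to every member gives a cover by proper submonoids of the same size. So [N]
    is a monoid, and [{N, {1}}] shows [sigma_m^*(M) = 2]. Covers of [N] by two
    proper subsemigroups and covers of [M] by two proper submonoids correspond
    (adjoin or remove [1]), so [sigma_m(M) > 2] iff [sigma_s(N) > 2]. Finally a
    monoid that is not a group is the union of its right-invertible elements and
    of the remaining ones, two proper subsemigroups; hence [N] is a group. *)

From Stdlib Require Import Arith ClassicalEpsilon Classical Lia Wf_nat.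

Set Implicit Arguments.

Section CoverNumber.
Variables (T : Type) (A : T -> Prop) (P : (T -> Prop) -> Prop).

Lemma cover_number_spec : is_cover_number A P (cover_number A P).
Proof.
  unfold cover_number. apply epsilon_spec.
  destruct (classic (exists n, 1 <= n /\ covered_by A P n)) as [Hcov|Hnone].
  - destruct (dec_inh_nat_subset_has_unique_least_element
                (fun n => 1 <= n /\ covered_by A P n)) as [k [[[Hk Hc] Hmin] _]].
    + intro n; apply classic.
    + exact Hcov.
    + exists (Some k). simpl. split; [exact Hk|split; [exact Hc|]].
      intros m Hm Hcm. exact (Hmin m (conj Hm Hcm)).
  - exists None. simpl. intros n Hn Hc. apply Hnone. eauto.
Qed.

Lemma covered_by_not_lt m :
  1 <= m -> covered_by A P m -> ~ ext_lt (Some m) (cover_number A P).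
Proof.
  intros Hm Hc. pose proof cover_number_spec as Hspec.
  destruct (cover_number A P) as [n|]; simpl in *.
  - destruct Hspec as [_ [_ Hmin]]. specialize (Hmin m Hm Hc). lia.
  - intros _. exact (Hspec m Hm Hc).
Qed.

Lemma covered_by_two :
  covered_by A P 2 <->
  exists S0 S1, P S0 /\ P S1 /\ forall x, A x <-> S0 x \/ S1 x.
Proof.
  split.
  - intros [F [HF Hcov]]. exists (F 0), (F 1).
    split; [apply HF; lia|split; [apply HF; lia|]].
    intro x. rewrite Hcov. split.
    + intros [i [Hi Fx]]. destruct i as [|[|i]]; auto; lia.
    + intros [Fx|Fx]; eexists; split; [|exact Fx| |exact Fx]; lia.
  - intros [S0 [S1 [H0 [H1 Hcov]]]].
    exists (fun i => if Nat.eqb i 0 then S0 else S1). split.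
    + intros [|i] _; assumption.
    + intro x. rewrite Hcov. split.
      * intros [Sx|Sx]; [exists 0|exists 1]; auto.
      * intros [[|i] [_ Sx]]; auto.
Qed.

Hypothesis P_proper : forall S, P S -> proper A S.

Lemma cover_number_ge2 n : cover_number A P = Some n -> 2 <= n.
Proof.
  intro Hn. pose proof cover_number_spec as Hspec. rewrite Hn in Hspec.
  destruct Hspec as [Hn1 [[F [HF Hcov]] _]].
  destruct (Nat.eq_dec n 1) as [->|]; [|lia].
  destruct (P_proper (HF 0 ltac:(lia))) as [x [Ax NFx]].
  apply Hcov in Ax. destruct Ax as [i [Hi Fx]].
  replace i with 0 in Fx by lia. contradiction.
Qed.

Lemma cover_number_eq2 : covered_by A P 2 -> cover_number A P = Some 2.
Proof.
  intro Hc. pose proof (covered_by_not_lt (m := 2) ltac:(lia) Hc) as Hle.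
  destruct (cover_number A P) as [n|] eqn:Hn; simpl in Hle; [|tauto].
  apply cover_number_ge2 in Hn. f_equal. lia.
Qed.

Lemma cover_number_gt2 : ext_lt (Some 2) (cover_number A P) <-> ~ covered_by A P 2.
Proof.
  split.
  - intros Hlt Hc. exact (covered_by_not_lt (m := 2) ltac:(lia) Hc Hlt).
  - intro Hnc. pose proof cover_number_spec as Hspec.
    destruct (cover_number A P) as [n|] eqn:Hn; simpl; [|exact I].
    apply cover_number_ge2 in Hn.
    destruct Hspec as [_ [Hc _]].
    destruct (Nat.eq_dec n 2) as [->|]; [contradiction|lia].
Qed.

End CoverNumber.

Section Semigroup.
Variables (T : Type) (op : T -> T -> T).
Hypothesis assoc : forall x y z, op x (op y z) = op (op x y) z.

(* If every element has a right inverse, the right inverse of a right inverse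
   of [x] is [x] itself, so right inverses are two-sided. *)
Lemma right_invertible_group (A : T -> Prop) u :
  is_identity_on op A u ->
  (forall x, A x -> exists r, A r /\ op x r = u) -> is_group_on op A.
Proof.
  intros [Au Hid] Hrinv. exists u. split; [split; assumption|].
  intros x Ax. destruct (Hrinv x Ax) as [r [Ar Hxr]].
  destruct (Hrinv r Ar) as [s [As Hrs]].
  assert (Hsx : s = x).
  { rewrite <- (proj1 (Hid s As)), <- Hxr, <- assoc, Hrs.
    exact (proj2 (Hid x Ax)). }
  subst s. exists r. auto.
Qed.

Lemma nongroup_monoid_covered_by_two (A : T -> Prop) u :
  (forall x y, A x -> A y -> A (op x y)) ->
  is_identity_on op A u -> ~ is_group_on op A ->
  covered_by A (fun S => subsg op A S /\ proper A S) 2.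
Proof.
  intros HA Hu Hng. pose proof Hu as [Au Hid].
  set (runit := fun x => exists r, A r /\ op x r = u).
  assert (Hy : exists y, A y /\ ~ runit y).
  { apply NNPP. intro Hall. apply Hng. apply (right_invertible_group Hu).
    intros x Ax. apply NNPP. intro Hx. apply Hall. exists x. auto. }
  destruct Hy as [y [Ay Ny]].
  assert (Hu_runit : runit u) by (exists u; split; [|apply Hid]; assumption).
  apply covered_by_two.
  exists (fun x => A x /\ runit x), (fun x => A x /\ ~ runit x).
  split; [|split].
  - split; [split; [|split]|].
    + exists u. auto.
    + intros x [Ax _]. exact Ax.
    + intros x z [Ax [r [Ar Hxr]]] [Az [s [As Hzs]]]. split; [auto|].
      exists (op s r). split; [auto|].
      rewrite <- assoc, (assoc z s r), Hzs, (proj1 (Hid r Ar)). exact Hxr.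
    + exists y. split; [exact Ay|]. intros [_ Hr]. contradiction.
  - split; [split; [|split]|].
    + exists y. auto.
    + intros x [Ax _]. exact Ax.
    + (* a right inverse [r] of [x z] yields the right inverse [z r] of [x] *)
      intros x z [Ax Nx] [Az _]. split; [auto|].
      intros [r [Ar Hr]]. apply Nx. exists (op z r). rewrite assoc. auto.
    + exists u. split; [exact Au|]. intros [_ Hn]. contradiction.
  - intro x. split.
    + intro Ax. destruct (classic (runit x)); auto.
    + intros [[Ax _]|[Ax _]]; exact Ax.
Qed.

End Semigroup.

Section Monoid.
Variables (T : Type) (op : T -> T -> T) (e : T).
Hypothesis assoc : forall x y z, op x (op y z) = op (op x y) z.
Hypothesis idl : forall x, op e x = x.
Hypothesis idr : forall x, op x e = x.

Local Notation full := (fun _ : T => True).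
Local Notation nonid := (fun x : T => x <> e).
Local Notation proper_submonoid :=
  (fun S => subsg op full S /\ S e /\ proper full S).
Local Notation proper_monoidal :=
  (fun S => subsg op full S /\ (exists u, is_identity_on op S u) /\ proper full S).
Local Notation proper_subsemigroup_nonid :=
  (fun S => subsg op nonid S /\ proper nonid S).

Lemma proper_submonoid_adjoin_identity (S : T -> Prop) :
  (forall x y, S x -> S y -> S (op x y)) -> (exists x, x <> e /\ ~ S x) ->
  proper_submonoid (fun x => x = e \/ S x).
Proof.
  intros HS [z [Hz NSz]]. split; [split; [|split]|split].
  - exists e. auto.
  - auto.
  - intros x y [->|Sx] [->|Sy].
    + left. apply idl.
    + right. rewrite idl. exact Sy.
    + right. rewrite idr. exact Sx.
    + right. auto.
  - auto.
  - exists z. split; [exact I|]. intros [|]; contradiction.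
Qed.

Lemma covered_nonid_lift :
  covered_by nonid proper_subsemigroup_nonid 2 ->
  covered_by full proper_submonoid 2.
Proof.
  rewrite !covered_by_two. intros [S0 [S1 [H0 [H1 Hcov]]]].
  assert (Hlift : forall S, proper_subsemigroup_nonid S ->
                  proper_submonoid (fun x => x = e \/ S x)).
  { intros S [[_ [_ HS]] [z [Hz NSz]]].
    apply proper_submonoid_adjoin_identity; eauto. }
  exists (fun x => x = e \/ S0 x), (fun x => x = e \/ S1 x).
  split; [auto|split; [auto|]].
  intro x. split; [intros _|tauto].
  destruct (classic (x = e)) as [->|Hx]; [auto|].
  apply Hcov in Hx. tauto.
Qed.

Lemma nonid_monoidal_of_lt :
  ext_lt (sigma_m_star op) (sigma_m op e) ->
  (forall x y, x <> e -> y <> e -> op x y <> e) /\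
  exists u, is_identity_on op nonid u.
Proof.
  intro Hlt. unfold sigma_m_star in Hlt.
  pose proof (cover_number_spec full proper_monoidal) as Hspec.
  destruct (cover_number full proper_monoidal) as [n|]; [|contradiction].
  destruct Hspec as [Hn [[F [HF Hcov]] _]].
  assert (HN : exists i, i < n /\ forall x, F i x <-> x <> e).
  { apply NNPP. intro Hnone.
    apply (covered_by_not_lt (A := full) (P := proper_submonoid) (m := n) Hn); [|exact Hlt].
    exists (fun i x => x = e \/ F i x). split.
    - intros i Hi. destruct (HF i Hi) as [[_ [_ HFi]] [_ [z [_ Nz]]]].
      apply proper_submonoid_adjoin_identity; [exact HFi|].
      apply NNPP. intro Hfull. destruct (classic (F i e)) as [Fe|NFe].
      + apply Nz. destruct (classic (z = e)) as [->|Hz]; [exact Fe|].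
        apply NNPP. eauto.
      + apply Hnone. exists i. split; [exact Hi|]. intro x. split.
        * intros Fx ->. contradiction.
        * intro Hx. apply NNPP. eauto.
    - intro x. split; [intros _|tauto].
      destruct (proj1 (Hcov x) I) as [i [Hi Fx]]. eauto. }
  destruct HN as [i [Hi HFi]].
  destruct (HF i Hi) as [[_ [_ Hcl]] [[u [Fu Hid]] _]].
  split.
  - intros x y Hx Hy. apply HFi, Hcl; apply HFi; assumption.
  - exists u. split; [apply HFi; exact Fu|].
    intros x Hx. apply Hid, HFi. exact Hx.
Qed.

Section NonidClosed.
Hypothesis nonid_closed : forall x y, x <> e -> y <> e -> op x y <> e.

Lemma sigma_m_star_eq2 u : is_identity_on op nonid u -> sigma_m_star op = Some 2.
Proof.
  intros [Hu Hid]. apply cover_number_eq2; [intros S [_ [_ HS]]; exact HS|].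
  apply covered_by_two. exists nonid, (fun x => x = e).
  split; [|split].
  - split; [split; [|split]|split].
    + exists u. exact Hu.
    + intros; exact I.
    + exact nonid_closed.
    + exists u. split; [exact Hu|]. intros x Hx. exact (Hid x Hx).
    + exists e. split; [exact I|]. intro H. apply H. reflexivity.
  - split; [split; [|split]|split].
    + exists e. reflexivity.
    + intros; exact I.
    + intros x y -> ->. apply idl.
    + exists e. split; [reflexivity|]. intros x ->. split; apply idl.
    + exists u. split; [exact I|]. exact Hu.
  - intro x. split; [intros _|tauto]. destruct (classic (x = e)); auto.
Qed.

(* Each member contains a non-identity element missed by the other member. *)
Lemma proper_submonoid_restrict S0 S1 :
  proper_submonoid S0 -> proper_submonoid S1 -> (forall x, S0 x \/ S1 x) ->
  proper_subsemigroup_nonid (fun x => x <> e /\ S0 x).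
Proof.
  intros [[_ [_ HS0]] [S0e [z [_ Nz]]]] [_ [S1e [x [_ Nx]]]] Hcov.
  assert (Hx : x <> e) by (intros ->; contradiction).
  split; [split; [|split]|].
  - exists x. destruct (Hcov x); tauto.
  - intros y [Hy _]. exact Hy.
  - intros a b [Ha Sa] [Hb Sb]. auto.
  - exists z. split; [intros ->; contradiction|tauto].
Qed.

Lemma covered_full_restrict :
  covered_by full proper_submonoid 2 ->
  covered_by nonid proper_subsemigroup_nonid 2.
Proof.
  rewrite !covered_by_two. intros [S0 [S1 [H0 [H1 Hcov]]]].
  assert (Hcov' : forall x, S0 x \/ S1 x) by (intro x; apply Hcov; exact I).
  exists (fun x => x <> e /\ S0 x), (fun x => x <> e /\ S1 x).
  split; [apply (proper_submonoid_restrict H0 H1 Hcov')|split].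
  - apply (proper_submonoid_restrict H1 H0). intro x. destruct (Hcov' x); auto.
  - intro x. split; [|tauto]. intro Hx. destruct (Hcov' x); auto.
Qed.

Lemma sigma_m_gt2_iff_sigma_s_gt2 :
  ext_lt (Some 2) (sigma_m op e) <-> ext_lt (Some 2) (sigma_s op nonid).
Proof.
  unfold sigma_m, sigma_s.
  rewrite !cover_number_gt2; [|intros S [_ HS]; exact HS|intros S [_ [_ HS]]; exact HS].
  split; intros Hnc Hc; apply Hnc.
  - apply covered_nonid_lift. exact Hc.
  - apply covered_full_restrict. exact Hc.
Qed.

Lemma nonid_group_of_sigma_s_gt2 u :
  is_identity_on op nonid u -> ext_lt (Some 2) (sigma_s op nonid) ->
  is_group_on op nonid.
Proof.
  intros Hu Hgt. apply NNPP. intro Hng.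
  unfold sigma_s in Hgt. rewrite cover_number_gt2 in Hgt; [|intros S [_ HS]; exact HS].
  exact (Hgt (nongroup_monoid_covered_by_two assoc nonid_closed Hu Hng)).
Qed.

End NonidClosed.

End Monoid.

Theorem mainTheorem20 (T : Type) (op : T -> T -> T) (e : T)
  (assoc : forall x y z, op x (op y z) = op (op x y) z)
  (idl : forall x, op e x = x) (idr : forall x, op x e = x) :
  (ext_lt (sigma_m_star op) (sigma_m op e) <->
     (subsg op (fun _ => True) (fun x => x <> e) /\
      is_group_on op (fun x => x <> e) /\
      ext_lt (Some 2) (sigma_s op (fun x => x <> e)))) /\
  (ext_lt (sigma_m_star op) (sigma_m op e) -> sigma_m_star op = Some 2).
Proof.
  assert (Hforward : ext_lt (sigma_m_star op) (sigma_m op e) ->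
            sigma_m_star op = Some 2 /\
            subsg op (fun _ => True) (fun x => x <> e) /\
            is_group_on op (fun x => x <> e) /\
            ext_lt (Some 2) (sigma_s op (fun x => x <> e))).
  { intro Hlt. destruct (nonid_monoidal_of_lt op e idl idr Hlt) as [Hcl [u Hu]].
    assert (Hstar : sigma_m_star op = Some 2) by exact (sigma_m_star_eq2 idl Hcl Hu).
    rewrite Hstar, (sigma_m_gt2_iff_sigma_s_gt2 op idl idr Hcl) in Hlt.
    split; [exact Hstar|split; [|split; [|exact Hlt]]].
    - split; [exists u; apply Hu|split; [intros; exact I|exact Hcl]].
    - exact (nonid_group_of_sigma_s_gt2 assoc Hcl Hu Hlt). }
  split; [split|].
  - intro Hlt. apply Hforward in Hlt. tauto.
  - intros [[_ [_ Hcl]] [[u [Hu _]] Hgt]].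
    rewrite (sigma_m_star_eq2 idl Hcl Hu).
    apply (sigma_m_gt2_iff_sigma_s_gt2 op idl idr Hcl). exact Hgt.
  - intro Hlt. apply Hforward in Hlt. tauto.
Qed.
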